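(* Let $x,y\in\mathbb{R}$ and let $\mathcal{A}$ be the Apollonian disk packing generated by a tricycle whose three disks have signed curvatures $1-y$, $x^2+y^2-y$ and $y$. Suppose $\mathcal{A}$ is integral up to scaling, i.e. there is a real $\lambda>0$ such that $\lambda\kappa\in\mathbb{Z}$ for the curvature $\kappa$ of every disk of $\mathcal{A}$. Then $x\in\mathbb{Q}$ and $y\in\mathbb{Q}$.
   Context: A tricycle is a triple of mutually tangent (generalized) disks (circles or lines, with signed curvatures, a line having curvature $0$ and an enclosing disk having negative curvature). A Descartes configuration is a quadruple of mutually tangent disks, with curvatures satisfying $(a+b+c+d)^2=2(a^2+b^2+c^2+d^2)$. The Apollonian disk packing generated by a tricycle is obtained by recursively completing every tricycle already constructed to a Descartes configuration. The triple $(1-y,\,x^2+y^2-y,\,y)$ is the curvature triple of the tricycle described by the tangency Pauli spinor $(1,\,x+iy)$, i.e. by the two tangency spinors $(1,0)$ and $(x,y)$ issuing from the disk of curvature $y$. *)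

From Stdlib Require Import Reals QArith.
Open Scope R_scope.

Definition descartes (a b c d : R) : Prop :=
  (a + b + c + d) ^ 2 = 2 * (a ^ 2 + b ^ 2 + c ^ 2 + d ^ 2).

(* Curvature triples of the tricycles constructed in the Apollonian packing
   generated by a tricycle with curvatures (a0, b0, c0): the generating
   tricycle is constructed, and every constructed tricycle (a,b,c) is
   completed to a Descartes configuration (a,b,c,d) in every possible way,
   which produces the new tricycles (a,b,d), (a,c,d), (b,c,d). *)
Inductive packing_tricycle (a0 b0 c0 : R) : R -> R -> R -> Prop :=
| pk_init : packing_tricycle a0 b0 c0 a0 b0 c0
| pk_step1 a b c d : packing_tricycle a0 b0 c0 a b c -> descartes a b c d ->
    packing_tricycle a0 b0 c0 a b d
| pk_step2 a b c d : packing_tricycle a0 b0 c0 a b c -> descartes a b c d ->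
    packing_tricycle a0 b0 c0 a c d
| pk_step3 a b c d : packing_tricycle a0 b0 c0 a b c -> descartes a b c d ->
    packing_tricycle a0 b0 c0 b c d.

Definition packing_curvature (a0 b0 c0 k : R) : Prop :=
  exists a b c, packing_tricycle a0 b0 c0 a b c /\ (k = a \/ k = b \/ k = c).

Definition integral_up_to_scaling (a0 b0 c0 : R) : Prop :=
  exists lam : R, 0 < lam /\
    forall k, packing_curvature a0 b0 c0 k -> exists z : Z, lam * k = IZR z.

Definition is_rational (r : R) : Prop := exists q : Q, r = Q2R q.

(* The sum of the generating curvatures 1 - y and y is 1, so the scaling
   factor λ is itself an integer and y = λy / λ is rational.  The tricycle
   has ab + bc + ca = x², so it completes to the two Descartes configurations
   with fourth curvature a + b + c ± 2x; the difference of their scaled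
   curvatures is 4λx, an integer, so x is rational as well. *)
From Stdlib Require Import Reals QArith Lra.
Open Scope R_scope.

Lemma descartes_completion (a b c s : R) :
  s ^ 2 = a * b + b * c + c * a -> descartes a b c (a + b + c + 2 * s).
Proof.
  intros Hs. unfold descartes.
  apply Rminus_diag_uniq.
  transitivity (4 * (a * b + b * c + c * a - s ^ 2)); [ring|].
  rewrite Hs. ring.
Qed.

Lemma packing_curvature_generator (a0 b0 c0 k : R) :
  k = a0 \/ k = b0 \/ k = c0 -> packing_curvature a0 b0 c0 k.
Proof. intros Hk. exists a0, b0, c0. split; [constructor | exact Hk]. Qed.

Lemma packing_curvature_completion (a0 b0 c0 a b c d : R) :
  packing_tricycle a0 b0 c0 a b c -> descartes a b c d ->
  packing_curvature a0 b0 c0 d.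
Proof.
  intros Habc Hd. exists a, b, d. split; [eapply pk_step1; eassumption | auto].
Qed.

Lemma is_rational_IZR_div (m n : Z) : is_rational (IZR m / IZR n).
Proof.
  destruct n as [|p|p].
  - exists 0%Q. unfold Q2R; simpl. unfold Rdiv. rewrite Rinv_0. ring.
  - exists (m # p)%Q. reflexivity.
  - exists ((- m) # p)%Q. unfold Q2R; simpl.
    rewrite opp_IZR, <- Pos2Z.opp_pos, opp_IZR. field. apply IZR_neq. discriminate.
Qed.

Theorem proposition7 (x y : R) :
  integral_up_to_scaling (1 - y) (x ^ 2 + y ^ 2 - y) y ->
  is_rational x /\ is_rational y.
Proof.
  intros [lam [Hlam Hint]].
  set (a := 1 - y). set (b := x ^ 2 + y ^ 2 - y).
  assert (Hdisc : forall s, s = x \/ s = - x -> s ^ 2 = a * b + b * y + y * a).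
  { intros s [-> | ->]; unfold a, b; ring. }
  destruct (Hint a) as [za Ea]; [apply packing_curvature_generator; auto|].
  destruct (Hint y) as [zc Ec]; [apply packing_curvature_generator; auto|].
  destruct (Hint (a + b + y + 2 * x)) as [zp Ep].
  { eapply packing_curvature_completion; [apply pk_init|].
    apply descartes_completion, Hdisc; auto. }
  destruct (Hint (a + b + y + 2 * - x)) as [zm Em].
  { eapply packing_curvature_completion; [apply pk_init|].
    apply descartes_completion, Hdisc; auto. }
  assert (Elam : lam = IZR (za + zc)) by (rewrite plus_IZR; unfold a in Ea; lra).
  split.
  - replace x with (IZR (zp - zm) / IZR (4 * (za + zc))) by
      (rewrite minus_IZR, mult_IZR, <- Elam, <- Ep, <- Em; field; lra).
    apply is_rational_IZR_div.
  - replace y with (IZR zc / IZR (za + zc)) by (rewrite <- Elam, <- Ec; field; lra).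
    apply is_rational_IZR_div.
Qed.
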